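(* Let $O$ be a set of Boolean functions. If $O\preceq\{\land,\top,\bot\}$ or $O\preceq\{\lor,\top,\bot\}$ or $O\preceq\{\neg,\bot\}$, then every $\mathrm{PL}_O$-formula $\phi$ is uniquely characterized with respect to $\mathrm{PL}_O$ by a set of at most $|\phi|_{\mathrm{dag}}+1$ labeled examples. Otherwise, there is no polynomial $p$ such that every $\mathrm{PL}_O$-formula $\phi$ is uniquely characterized with respect to $\mathrm{PL}_O$ by a set of at most $p(|\phi|_{\mathrm{dag}})$ labeled examples.
   Context: A Boolean function is a map $\{0,1\}^n\to\{0,1\}$ with $n\ge 1$; the constants $\top,\bot$ are treated as constant unary Boolean functions; $\land,\lor,\neg$ are the usual Boolean functions. For a set $O$ of Boolean functions, $\langle O\rangle$ is the smallest set of Boolean functions containing $O$ and all projections and closed under composition; $O\preceq O'$ means $\langle O\rangle\subseteq\langle O'\rangle$. Fix a countably infinite set of propositional variables. $\mathrm{PL}_O$ is the set of formulas generated by $\phi::=x\mid f(\phi_1,\dots,\phi_n)$ with $x$ a variable and $f\in O$ of arity $n$, with the obvious semantics under truth assignments $V$; two formulas are equivalent if they agree under every truth assignment. $|\phi|_{\mathrm{dag}}$ is the number of distinct subformulas of $\phi$. A labeled example is a pair $(V,\mathrm{lab})$ with $V$ a truth assignment and $\mathrm{lab}\in\{0,1\}$; $\phi$ fits it if $\phi$ evaluates to $\mathrm{lab}$ under $V$. A set $E$ of labeled examples uniquely characterizes $\phi$ with respect to $\mathrm{PL}_O$ if $\phi$ fits all of $E$ and every $\mathrm{PL}_O$-formula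 fitting all of $E$ is equivalent to $\phi$. *)

From mathcomp Require Import all_boot all_order all_algebra.
From Stdlib Require List.
Set Implicit Arguments. Unset Strict Implicit. Unset Printing Implicit Defensive.

(* A Boolean function of arity n.+1 (arity >= 1): {0,1}^(n+1) -> {0,1}. *)
Definition bfun (n : nat) := {ffun n.+1.-tuple bool -> bool}.
Definition BF := {n : nat & bfun n}.
Definition mkBF (n : nat) (f : bfun n) : BF := existT bfun n f.
Definition arity (f : BF) : nat := (projT1 f).+1.

(* Concrete connectives; constants are unary constant functions. *)
Definition and_bf : BF := mkBF (n := 1) [ffun x : 2.-tuple bool => tnth x ord0 && tnth x ord_max].
Definition or_bf  : BF := mkBF (n := 1) [ffun x : 2.-tuple bool => tnth x ord0 || tnth x ord_max].
Definition neg_bf : BF := mkBF (n := 0) [ffun x : 1.-tuple bool => ~~ tnth x ord0].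
Definition top_bf : BF := mkBF (n := 0) [ffun _ : 1.-tuple bool => true].
Definition bot_bf : BF := mkBF (n := 0) [ffun _ : 1.-tuple bool => false].

Definition bfset := BF -> Prop.

Definition proj_bf (n : nat) (i : 'I_n.+1) : BF := mkBF [ffun x : n.+1.-tuple bool => tnth x i].

Definition comp_bf (n m : nat) (f : bfun n) (gs : 'I_n.+1 -> bfun m) : BF :=
  mkBF [ffun x : m.+1.-tuple bool => f [tuple gs i x | i < n.+1]].

Inductive clone (O : bfset) : BF -> Prop :=
| cl_base f : O f -> clone O f
| cl_proj n (i : 'I_n.+1) : clone O (proj_bf i)
| cl_comp n m (f : bfun n) (gs : 'I_n.+1 -> bfun m) :
    clone O (mkBF f) -> (forall i, clone O (mkBF (gs i))) -> clone O (comp_bf f gs).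

Definition preceq (O O' : bfset) : Prop := forall f, clone O f -> clone O' f.

Definition set_and_top_bot : bfset := fun f => f = and_bf \/ f = top_bf \/ f = bot_bf.
Definition set_or_top_bot  : bfset := fun f => f = or_bf \/ f = top_bf \/ f = bot_bf.
Definition set_neg_bot     : bfset := fun f => f = neg_bf \/ f = bot_bf.

Inductive formula : Type :=
| Var : nat -> formula
| App : BF -> list formula -> formula.

Inductive inPL (O : bfset) : formula -> Prop :=
| inPL_var x : inPL O (Var x)
| inPL_app f args : O f -> size args = arity f ->
    (forall a, List.In a args -> inPL O a) -> inPL O (App f args).

Definition assignment := nat -> bool.

Definition bf_apply (f : BF) (vals : seq bool) : bool :=
  projT2 f [tuple nth false vals i | i < (projT1 f).+1].

Fixpoint eval (V : assignment) (phi : formula) : bool :=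
  match phi with
  | Var x => V x
  | App f args => bf_apply f (map (eval V) args)
  end.

Definition equivalent (phi psi : formula) : Prop := forall V, eval V phi = eval V psi.

Inductive subform : formula -> formula -> Prop :=
| sub_refl phi : subform phi phi
| sub_app psi a f args : List.In a args -> subform psi a -> subform psi (App f args).

Definition dag_size (phi : formula) (k : nat) : Prop :=
  exists l : list formula, List.NoDup l /\ (forall psi, List.In psi l <-> subform psi phi)
                        /\ length l = k.

Definition example := (assignment * bool)%type.
Definition fits (phi : formula) (e : example) : Prop := eval e.1 phi = e.2.

Definition uniquely_characterizes (O : bfset) (E : seq example) (phi : formula) : Prop :=
  (forall e, List.In e E -> fits phi e) /\
  (forall psi, inPL O psi -> (forall e, List.In e E -> fits psi e) -> equivalent psi phi).

From Pilot Require Import Defs.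
From mathcomp Require Import all_boot all_order all_algebra.
From Stdlib Require Import Classical.
From mathcomp Require Import zify.
Set Implicit Arguments. Unset Strict Implicit. Unset Printing Implicit Defensive.

(* If O is below {/\, T, F}, every PL_O formula denotes a /\-homomorphism: a
   constant, or the conjunction of its essential variables S.  Among
   /\-homomorphisms it is pinned down by the assignment that is true exactly on S
   and, for each x in S, the assignment that is false only at x: at most
   |vars| + 1 <= |phi|_dag + 1 examples.  The \/ case is the same argument for
   the other lattice operation, and formulas over {~, F} depend on at most one
   variable, so two examples suffice.
   Otherwise <O> leaves each of the three clones.  Identifying variables gives
   ternary witnesses, and a certificate checked by computation shows that they
   always compose to majority, x xor y xor z, x /\ (y \/ z) or x \/ (y /\ z).
   With the first, third or fourth, using x0 and x1 as switches, one builds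
   phi_n = \/_(i <= n) (x_i /\ y_i) of linear size and 2^(n+1) variants
   phi_n \/ /\_i z_i with z_i in {x_i, y_i}, each separated from phi_n by some
   assignment but no two by the same one; with parity, x0 xor y xor z fits every
   example set on which y and z agree.  Either way characterizing sets must be
   exponentially large. *)

(** * Formulas, substitution and DAG size *)

Lemma InP (T : eqType) (x : T) (s : seq T) : reflect (List.In x s) (x \in s).
Proof.
elim: s => [|y s IH] /=; first by right.
rewrite inE; apply: (iffP orP) => [[/eqP ->|/IH]|[->|/IH]]; by [left|right|left|right].
Qed.

Lemma In_map_inv (T U : Type) (f : T -> U) (s : seq T) y :
  List.In y (map f s) -> exists2 x, List.In x s & y = f x.
Proof.
elim: s => //= x s IH [<-|/IH [z Hz ->]]; first by exists x; [left|].
by exists z; [right|].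
Qed.

Lemma formula_ind_In (P : formula -> Prop) :
  (forall x, P (Var x)) ->
  (forall f args, (forall a, List.In a args -> P a) -> P (App f args)) ->
  forall phi, P phi.
Proof.
move=> HV HA; refine (fix IH phi := match phi with
  | Var x => HV x
  | App f args => HA f args ((fix IHl (l : seq formula) : forall a, List.In a l -> P a :=
       match l with
       | [::] => fun a H => match H with end
       | b :: l' => fun a H => match H with
                               | or_introl E => match E with erefl => IH b end
                               | or_intror H' => IHl l' a H'
                               end
       end) args)
  end).
Qed.

Lemma nth_In (T : Type) (d : T) (s : seq T) i : i < size s -> List.In (nth d s i) s.
Proof. by elim: s i => [|x s IH] [|i] //= Hi; [left|right; apply: IH]. Qed.

Lemma In_nth (T : Type) (d : T) (s : seq T) x :
  List.In x s -> exists i : 'I_(size s), nth d s i = x.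
Proof.
elim: s => //= y s IH [<-|/IH [i <-]]; first by exists ord0.
by exists (lift ord0 i).
Qed.

Lemma nth_map_eval V f args (i : 'I_(arity f)) : size args = arity f ->
  nth false (map (eval V) args) i = eval V (nth (Var 0) args i).
Proof. by move=> Hsize; rewrite (nth_map (Var 0)) // Hsize. Qed.

Fixpoint subst (s : nat -> formula) (phi : formula) : formula :=
  match phi with
  | Var x => s x
  | App f args => App f (map (subst s) args)
  end.

Lemma eval_subst V s phi : eval V (subst s phi) = eval (fun x => eval V (s x)) phi.
Proof.
elim/formula_ind_In: phi => //= f args IH; congr bf_apply.
by rewrite -map_comp; apply: List.map_ext_in.
Qed.

Lemma inPL_subst O s phi : inPL O phi -> (forall x, inPL O (s x)) -> inPL O (subst s phi).
Proof.
move=> H Hs; elim: H => [x|f args Of Hsize _ IH] //=.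
constructor => //; first by rewrite size_map.
by move=> a /List.in_map_iff [b [<- Hb]]; apply: IH.
Qed.

Lemma mem_flatten_map_In (T : Type) (U : eqType) (F : T -> seq U) (l : seq T) y :
  y \in flatten (map F l) <-> exists2 x, List.In x l & y \in F x.
Proof.
elim: l => [|x l IH] /=; first by split=> // -[].
rewrite mem_cat; split=> [/orP [Hy|/IH [z Hz Hy]]|[z [<-|Hz] Hy]]; first by exists x; [left|].
- by exists z; [right|].
- by rewrite Hy.
- by apply/orP; right; apply/IH; exists z.
Qed.

Fixpoint vars (phi : formula) : seq nat :=
  match phi with
  | Var x => [:: x]
  | App f args => flatten (map vars args)
  end.

Lemma eval_vars V V' phi : {in vars phi, V =1 V'} -> eval V phi = eval V' phi.
Proof.
elim/formula_ind_In: phi => [x|f args IH] /= HV; first by apply: HV; rewrite inE.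
congr bf_apply; apply: List.map_ext_in => a Ha; apply: IH => // x Hx; apply: HV.
by apply/mem_flatten_map_In; exists a.
Qed.

Lemma subform_vars x phi : x \in vars phi -> subform (Var x) phi.
Proof.
elim/formula_ind_In: phi => [y|f args IH] /=; first by rewrite inE => /eqP ->; constructor.
by case/mem_flatten_map_In => a Ha Hx; apply: sub_app Ha (IH _ Ha Hx).
Qed.

Lemma dag_size_gt0 phi k : dag_size phi k -> 0 < k.
Proof. by case=> L [_ [HL <-]]; move: (proj2 (HL phi) (Defs.sub_refl phi)); case: L {HL}. Qed.

Lemma dag_size_Var x : dag_size (Var x) 1.
Proof.
exists [:: Var x]; split; first by constructor; [case|constructor].
by split=> // psi; split=> [[<-|[]]|H]; [constructor|inversion H; left].
Qed.

Lemma NoDup_map_Var (s : seq nat) : uniq s -> List.NoDup (map Var s).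
Proof.
elim: s => [|x s IH] /=; first by constructor.
case/andP => Hx /IH ND; constructor => // /List.in_map_iff [y [[->] /InP Hy]].
by rewrite Hy in Hx.
Qed.

Lemma size_vars_le_dag_size phi k : dag_size phi k -> size (undup (vars phi)) <= k.
Proof.
case=> L [ND [HL <-]]; rewrite -(size_map Var); apply/leP.
apply: List.NoDup_incl_length; first by apply: NoDup_map_Var; apply: undup_uniq.
move=> _ /List.in_map_iff [x [<- Hx]]; apply/HL/subform_vars.
by rewrite -mem_undup; apply/InP.
Qed.

Definition dag_le (phi : formula) (N : nat) :=
  exists2 L : seq formula, size L <= N & forall psi, subform psi phi -> List.In psi L.

Lemma NoDup_restrict (T : Type) (P : T -> Prop) (L : seq T) : exists L',
  [/\ List.NoDup L', size L' <= size L & forall x, List.In x L' <-> List.In x L /\ P x].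
Proof.
elim: L => [|y L [L' [ND Hsize HL']]].
  by exists [::]; split=> [|//|x]; [constructor|split=> [[]|[[]]]].
have [[Py Ny]|Hy] := classic (P y /\ ~ List.In y L').
  exists (y :: L'); split=> [|//|x]; first by constructor.
  split=> [[<-|/HL' [Hx Px]]|[[<-|Hx] Px]]; [by split; [left|]|by split; [right|]|by left|].
  by right; apply/HL'.
exists L'; split=> [//||x]; first exact: leqW.
split=> [/HL' [Hx Px]|[[<-|Hx] Px]]; [by split; [right|]| |by apply/HL'].
by apply: NNPP => Nx; apply: Hy.
Qed.

Lemma dag_le_dag_size phi N : dag_le phi N -> exists2 k, k <= N & dag_size phi k.
Proof.
case=> L HN HL; have [L' [ND Hsize HL']] := NoDup_restrict (subform^~ phi) L.
exists (size L'); first exact: leq_trans HN.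
exists L'; split=> //; split=> // psi; split=> [/HL' []//|Hpsi].
by apply/HL'; split=> //; apply: HL.
Qed.

Lemma dag_le_Var x : dag_le (Var x) 1.
Proof. by exists [:: Var x] => // psi H; inversion H; left. Qed.

Lemma dag_le_leq phi N N' : dag_le phi N -> N <= N' -> dag_le phi N'.
Proof. by case=> L HN HL HNN'; exists L => //; apply: leq_trans HNN'. Qed.

Fixpoint subformulas (phi : formula) : seq formula :=
  phi :: match phi with
         | Var _ => [::]
         | App f args => flatten (map subformulas args)
         end.

Lemma In_subformulas psi phi : subform psi phi -> List.In psi (subformulas phi).
Proof.
elim=> [[x|f args]|{}psi a f args Ha _ IH] /=; [by left|by left|right].
exact: (List.in_concat (map subformulas args) psi).2
  (ex_intro _ (subformulas a) (conj (List.in_map _ _ _ Ha) IH)).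
Qed.

Lemma subform_subst s psi G : subform psi (subst s G) ->
  (exists2 H, subform H G & psi = subst s H) \/ exists v, subform psi (s v).
Proof.
elim/formula_ind_In: G psi => [x|f args IH] psi /= Hpsi; first by right; exists x.
inversion Hpsi as [|psi' a f' args' Ha Hsub]; subst.
  by left; exists (App f args) => //; constructor.
case/List.in_map_iff: Ha => b [Eb Hb]; subst.
case: (IH _ Hb _ Hsub) => [[H HH ->]|]; last by right.
by left; exists H => //; apply: sub_app Hb HH.
Qed.

Lemma dag_le_subst s G (L : seq formula) :
  (forall v psi, subform psi (s v) -> List.In psi L) ->
  dag_le (subst s G) (size (subformulas G) + size L).
Proof.
move=> HL; exists (map (subst s) (subformulas G) ++ L); first by rewrite size_cat size_map.
move=> psi /subform_subst [[H /In_subformulas HG ->]|[v Hv]]; apply/List.in_app_iff.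
  by left; apply: List.in_map.
by right; apply: HL Hv.
Qed.

(* Every variable other than 0 and 1 is sent to [c]. *)
Definition subst3 (G a b c : formula) : formula := subst (nth c [:: a; b; c]) G.

Lemma dag_le_subst3 G a b c Na Nb Nc : dag_le a Na -> dag_le b Nb -> dag_le c Nc ->
  dag_le (subst3 G a b c) (size (subformulas G) + (Na + Nb + Nc)).
Proof.
case=> [La HNa HLa] [Lb HNb HLb] [Lc HNc HLc].
apply: dag_le_leq (dag_le_subst (L := La ++ Lb ++ Lc) _ _) _; last first.
  by rewrite !size_cat leq_add2l addnA !leq_add.
move=> v psi Hpsi; rewrite !List.in_app_iff.
case: v Hpsi => [|[|v]] /= Hpsi; first by left; apply: HLa.
  by right; left; apply: HLb.
by right; right; apply: HLc; move: Hpsi; case: v => //= v; rewrite nth_nil.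
Qed.

Lemma dag_le_subst3_dup G a b Na Nb : dag_le a Na -> dag_le b Nb ->
  dag_le (subst3 G a b b) (size (subformulas G) + (Na + Nb)).
Proof.
case=> [La HNa HLa] [Lb HNb HLb].
apply: dag_le_leq (dag_le_subst (L := La ++ Lb) _ _) _; last by rewrite size_cat leq_add2l leq_add.
move=> [|v] psi Hpsi; apply/List.in_app_iff; first by left; apply: HLa.
by right; apply: HLb; move: Hpsi; case: v => [|[|v]] //=; rewrite nth_nil.
Qed.

(* Doubling [u 0] makes [F] the outermost connective even for [n = 0]. *)
Definition fold_formula (F : formula -> formula -> formula) (u : nat -> formula) (n : nat) :=
  foldr F (F (u 0) (u 0)) (map u (iota 1 n)).

Lemma dag_le_fold_formula F u n c M :
  (forall a b Na Nb, dag_le a Na -> dag_le b Nb -> dag_le (F a b) (c + (Na + Nb))) ->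
  (forall i, dag_le (u i) M) -> dag_le (fold_formula F u n) ((c + M) * n.+1 + M).
Proof.
move=> HF Hu; rewrite /fold_formula; elim: n 1 => [|n IH] m /=.
  by apply: dag_le_leq (HF _ _ _ _ (Hu 0) (Hu 0)) _; lia.
by apply: dag_le_leq (HF _ _ _ _ (Hu m) (IH m.+1)) _; lia.
Qed.

Lemma inPL_fold_formula O F u n : (forall a b, inPL O a -> inPL O b -> inPL O (F a b)) ->
  (forall i, inPL O (u i)) -> inPL O (fold_formula F u n).
Proof. by move=> HF Hu; rewrite /fold_formula; elim: (iota 1 n) => /= [|i l IH]; apply: HF. Qed.

(** * Invariants of the three clones *)

Section Preservation.
Variable op : bool -> bool -> bool.

Definition bf_preserves n (f : bfun n) :=
  forall a b : n.+1.-tuple bool, f [tuple op (tnth a i) (tnth b i) | i < n.+1] = op (f a) (f b).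

Definition preserves (Phi : assignment -> bool) :=
  forall V V' : assignment, Phi (fun x => op (V x) (V' x)) = op (Phi V) (Phi V').

Lemma clone_preserves O : (forall f, O f -> bf_preserves (projT2 f)) ->
  forall h, clone O h -> bf_preserves (projT2 h).
Proof.
move=> HO h; elim=> [f /HO //|n i|n m f gs _ Hf _ Hgs] a b /=; rewrite !ffunE ?tnth_mktuple //.
rewrite -Hf; congr (f _); apply: eq_from_tnth => i; rewrite !tnth_mktuple; exact: Hgs.
Qed.

Lemma eval_preserves O phi : (forall f, O f -> bf_preserves (projT2 f)) -> inPL O phi ->
  preserves (eval^~ phi).
Proof.
move=> HO; elim=> [x|[n f] args Of Hsize _ IH] V V' //=; rewrite /bf_apply /= -(HO _ Of).
congr (f _); apply: eq_from_tnth => i; rewrite !tnth_mktuple !(nth_map_eval _ (f := mkBF f)) //.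
by apply: IH; apply: nth_In; rewrite Hsize.
Qed.

End Preservation.

Definition bf_ess_unary n (f : bfun n) :=
  exists i, forall a b : n.+1.-tuple bool, tnth a i = tnth b i -> f a = f b.

Definition ess_unary (Phi : assignment -> bool) :=
  exists x, forall V V' : assignment, V x = V' x -> Phi V = Phi V'.

Lemma clone_ess_unary O : (forall f, O f -> bf_ess_unary (projT2 f)) ->
  forall h, clone O h -> bf_ess_unary (projT2 h).
Proof.
move=> HO h; elim=> [f /HO //|n i|n m f gs _ [i Hf] _ Hgs]; first by exists i => a b; rewrite !ffunE.
have [j Hj] := Hgs i; exists j => a b Hab /=; rewrite !ffunE; apply: Hf.
by rewrite !tnth_mktuple; apply: Hj.
Qed.

Lemma eval_ess_unary O phi : (forall f, O f -> bf_ess_unary (projT2 f)) -> inPL O phi ->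
  ess_unary (eval^~ phi).
Proof.
move=> HO; elim=> [x|[n f] args Of Hsize _ IH]; first by exists x.
have [i Hi] := HO _ Of; have [|x Hx] := IH (nth (Var 0) args i); first by apply: nth_In; rewrite Hsize.
exists x => V V' HV; apply: Hi; rewrite !tnth_mktuple !(nth_map_eval _ (f := mkBF f)) //.
exact: Hx.
Qed.

Lemma and_top_bot_preserve_andb f : set_and_top_bot f -> bf_preserves andb (projT2 f).
Proof. by case=> [->|[->|->]] a b; rewrite /= !ffunE ?tnth_mktuple // andbACA. Qed.

Lemma or_top_bot_preserve_orb f : set_or_top_bot f -> bf_preserves orb (projT2 f).
Proof. by case=> [->|[->|->]] a b; rewrite /= !ffunE ?tnth_mktuple // orbACA. Qed.

Lemma neg_bot_ess_unary f : set_neg_bot f -> bf_ess_unary (projT2 f).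
Proof. by case=> [->|->]; exists ord0 => a b; rewrite /= !ffunE // => ->. Qed.

(** * Small characterizing sets inside the three clones *)

Definition supported (X : seq nat) (Phi : assignment -> bool) :=
  forall V V' : assignment, {in X, V =1 V'} -> Phi V = Phi V'.

Definition characterizes (P : (assignment -> bool) -> Prop) (E : seq example)
    (Phi : assignment -> bool) :=
  (forall ex, List.In ex E -> Phi ex.1 = ex.2) /\
  forall Psi, P Psi -> (forall ex, List.In ex E -> Psi ex.1 = ex.2) -> Psi =1 Phi.

Lemma characterizes_uniquely O P E phi : (forall psi, inPL O psi -> P (eval^~ psi)) ->
  characterizes P E (eval^~ phi) -> uniquely_characterizes O E phi.
Proof. by move=> HP [Hfit Huniq]; split=> // psi /HP; apply: Huniq. Qed.

Lemma eval_supported phi : supported (undup (vars phi)) (eval^~ phi).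
Proof. by move=> V V' HV; apply: eval_vars => x Hx; apply: HV; rewrite mem_undup. Qed.

(* The arguments for /\ and \/ are run once, for the lattice operation with unit [e]. *)
Definition lat_op (e : bool) : bool -> bool -> bool := if e then andb else orb.

Section LatticeOp.
Variable e : bool.
Local Notation op := (lat_op e).

Lemma opeb b : op e b = b. Proof. by case: e. Qed.
Lemma opbe b : op b e = b. Proof. by case: e b => -[]. Qed.
Lemma opNeb b : op (~~ e) b = ~~ e. Proof. by case: e. Qed.
Lemma opbNe b : op b (~~ e) = ~~ e. Proof. by case: e b => -[]. Qed.

Lemma foldr_op (T : Type) (F : T -> bool) (l : seq T) :
  foldr (fun i b => op (F i) b) e l = if all (fun i => F i == e) l then e else ~~ e.
Proof.
elim: l => [|i l IH] /=; first by case: e.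
by rewrite IH; case: eqP => [->|/eqP]; rewrite ?opeb //; case: (F i); case: e.
Qed.

Definition point (x : nat) : assignment := fun y => if y == x then ~~ e else e.
Definition indicator (S : seq nat) : assignment := fun y => if y \in S then e else ~~ e.
Definition essential (X : seq nat) (Phi : assignment -> bool) := [seq x <- X | Phi (point x) == ~~ e].

Lemma essential_point X Phi : {in essential X Phi, forall x, Phi (point x) = ~~ e}.
Proof. by move=> x; rewrite mem_filter => /andP [/eqP]. Qed.

Lemma preserves_const X Psi V : supported X Psi -> preserves op Psi ->
  Psi (fun _ => e) = ~~ e -> Psi V = ~~ e.
Proof.
move=> Hsupp Hop He; rewrite -(opbNe (Psi V)) -He -Hop.
by apply: Hsupp => y _; rewrite opbe.
Qed.

Lemma preserves_monomial X Psi S V : supported X Psi -> preserves op Psi ->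
  Psi (indicator S) = e -> {in S, forall x, Psi (point x) = ~~ e} ->
  Psi V = if all (fun x => V x == e) S then e else ~~ e.
Proof.
move=> Hsupp Hop HS Hpt; case: allP => [Hall|/allP]; rewrite /=.
  have H : Psi (fun y => op (V y) (indicator S y)) = Psi (indicator S).
    apply: Hsupp => y _; rewrite /indicator.
    by case: ifP => [/Hall /eqP ->|_]; rewrite ?opeb ?opbNe.
  by rewrite Hop HS opbe in H.
rewrite -has_predC => /hasP [x Hx /= HVx].
have H : Psi (fun y => op (V y) (point x y)) = Psi V.
  apply: Hsupp => y _; rewrite /point; case: eqP => [->|_]; last by rewrite opbe.
  by rewrite opbNe; move: HVx; case: (V x); case: e.
by rewrite Hop Hpt // opbNe in H.
Qed.

Lemma foldr_point y l : foldr (fun x b => op (point x y) b) e l = if y \in l then ~~ e else e.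
Proof. by elim: l => //= x l ->; rewrite inE /point; case: eqP => _ /=; [exact: opNeb|exact: opeb]. Qed.

Lemma preserves_foldr Phi (F : nat -> assignment) l : preserves op Phi ->
  Phi (fun y => foldr (fun x b => op (F x y) b) e l) =
  foldr (fun x b => op (Phi (F x)) b) (Phi (fun _ => e)) l.
Proof. by move=> Hop; elim: l => //= x l <-; apply: Hop. Qed.

Lemma preserves_indicator_essential X Phi : supported X Phi -> preserves op Phi ->
  Phi (fun _ => e) = e -> Phi (indicator (essential X Phi)) = e.
Proof.
move=> Hsupp Hop He; set S := essential X Phi.
(* On [X], [indicator S] is the [op]-combination of the points outside [S]. *)
rewrite (Hsupp _ (fun y => foldr (fun x b => op (point x y) b) e [seq x <- X | x \notin S])).
  rewrite preserves_foldr // He.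
  have : {in [seq x <- X | x \notin S], forall x, Phi (point x) = e}.
    move=> x; rewrite mem_filter [x \in S]mem_filter => /andP [HxS Hx]; move: HxS.
    by rewrite Hx andbT; case: (Phi (point x)); case: e.
  by move=> HX'; rewrite foldr_op; case: allP => // -[x /HX' ->].
move=> y Hy; rewrite foldr_point [in RHS]mem_filter Hy andbT /indicator.
by case: (y \in S).
Qed.

Lemma preserves_characterized X Phi : supported X Phi -> preserves op Phi ->
  exists2 E, size E <= (size X).+1 &
    characterizes (fun Psi => (exists Y, supported Y Psi) /\ preserves op Psi) E Phi.
Proof.
move=> Hsupp Hop; have [He|HNe] := eqVneq (Phi (fun _ => e)) e; last first.
  have HNe' : Phi (fun _ => e) = ~~ e by move: HNe; case: (Phi (fun _ => e)); case: e.
  exists [:: (fun _ => e, ~~ e)]; first done.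
  split=> [ex [<-|[]] //|Psi [[Y HY] HPsi] HE V].
  rewrite (preserves_const V Hsupp Hop HNe').
  by apply: (preserves_const V HY HPsi); apply: (HE (_, _)); left.
set S := essential X Phi; have HSpt := @essential_point X Phi.
have HSind := preserves_indicator_essential Hsupp Hop He.
exists ((indicator S, e) :: [seq (point x, ~~ e) | x <- S]).
  by rewrite /= size_map ltnS size_filter count_size.
split=> [ex [<-|/List.in_map_iff [x [<- /InP Hx]]]|Psi [[Y HY] HPsi] HE V]; [exact: HSind|exact: HSpt|].
rewrite (preserves_monomial V Hsupp Hop HSind HSpt); apply: (preserves_monomial V HY HPsi).
  by apply: (HE (_, _)); left.
by move=> x Hx; apply: (HE (_, _)); right; apply: (List.in_map (fun x => (point x, ~~ e))); apply/InP.
Qed.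

End LatticeOp.

Lemma ess_unary_characterized Phi : ess_unary Phi ->
  exists2 E, size E <= 2 & characterizes ess_unary E Phi.
Proof.
case=> x Hx; pose Ex : assignment := fun y => y == x.
have HPhi V : Phi V = Phi (if V x then Ex else fun _ => false).
  by apply: Hx; case: (V x); rewrite /= /Ex ?eqxx.
have [Hconst|Hnconst] := eqVneq (Phi Ex) (Phi (fun _ => false)).
  exists [:: (fun _ => false, Phi Ex); (fun _ => true, Phi Ex)] => //.
  split=> [ex [<-|[<-|[]]] /=|Psi [y Hy] HE V]; first by rewrite Hconst.
    by rewrite (HPhi (fun _ => true)).
  have HV0 : Psi (fun _ => false) = Phi Ex by apply: (HE (_, _)); left.
  have HV1 : Psi (fun _ => true) = Phi Ex by apply: (HE (_, _)); right; left.
  rewrite (Hy V (if V y then fun _ => true else fun _ => false)); last by case: (V y).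
  by rewrite HPhi; case: (V x); case: (V y); rewrite /= ?HV0 ?HV1 -?Hconst.
exists [:: (Ex, Phi Ex); (fun _ => false, Phi (fun _ => false))] => //.
split=> [ex [<-|[<-|[]]] //|Psi [y Hy] HE V].
have HEx : Psi Ex = Phi Ex by apply: (HE (_, _)); left.
have HV0 : Psi (fun _ => false) = Phi (fun _ => false) by apply: (HE (_, _)); right; left.
have [Eyx|Nyx] := eqVneq y x.
  have -> : Psi V = Psi (if V x then Ex else fun _ => false).
    by apply: Hy; rewrite Eyx; case: (V x); rewrite /= /Ex ?eqxx.
  by rewrite HPhi; case: (V x).
by move: Hnconst; rewrite -HEx -HV0 (Hy Ex (fun _ => false)) ?eqxx // /Ex (negbTE Nyx).
Qed.

Lemma preserves_small_characterization O X e phi k :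
  (forall f, X f -> bf_preserves (lat_op e) (projT2 f)) -> preceq O X ->
  inPL O phi -> dag_size phi k ->
  exists E : seq example, size E <= k.+1 /\ uniquely_characterizes O E phi.
Proof.
move=> HX HOX Hphi Hk.
have HO f : O f -> bf_preserves (lat_op e) (projT2 f).
  by move=> Of; apply: clone_preserves HX _ (HOX _ (cl_base Of)).
have [E HE Hchar] := preserves_characterized (@eval_supported phi) (eval_preserves HO Hphi).
exists E; split; first by apply: leq_trans HE _; rewrite ltnS; apply: size_vars_le_dag_size.
apply: characterizes_uniquely Hchar => psi Hpsi.
by split; [exists (undup (vars psi)); apply: eval_supported|apply: eval_preserves HO Hpsi].
Qed.

Lemma ess_unary_small_characterization O phi k :
  preceq O set_neg_bot -> inPL O phi -> dag_size phi k ->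
  exists E : seq example, size E <= k.+1 /\ uniquely_characterizes O E phi.
Proof.
move=> HOX Hphi Hk.
have HO f : O f -> bf_ess_unary (projT2 f).
  by move=> Of; apply: clone_ess_unary neg_bot_ess_unary _ (HOX _ (cl_base Of)).
have [E HE Hchar] := ess_unary_characterized (eval_ess_unary HO Hphi).
exists E; split; first by apply: leq_trans HE _; rewrite ltnS; apply: dag_size_gt0 Hk.
by apply: characterizes_uniquely Hchar => psi; apply: eval_ess_unary.
Qed.

Theorem small_characterization O :
  preceq O set_and_top_bot \/ preceq O set_or_top_bot \/ preceq O set_neg_bot ->
  forall phi, inPL O phi -> forall k, dag_size phi k ->
  exists E : seq example, size E <= k.+1 /\ uniquely_characterizes O E phi.
Proof.
case=> [HO|[HO|HO]] phi Hphi k.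
- exact: (preserves_small_characterization (e := true) and_top_bot_preserve_andb HO Hphi).
- exact: (preserves_small_characterization (e := false) or_top_bot_preserve_orb HO Hphi).
- exact: ess_unary_small_characterization HO Hphi.
Qed.

(** * Membership in the three clones *)

Definition bin_bf (op : bool -> bool -> bool) : BF :=
  mkBF (n := 1) [ffun x : 2.-tuple bool => op (tnth x ord0) (tnth x ord_max)].
Definition const_bf (b : bool) : BF := mkBF (n := 0) [ffun _ => b].

Lemma mkBF_ext n (f g : bfun n) : f =1 g -> mkBF f = mkBF g.
Proof. by move=> H; congr existT; apply/ffunP. Qed.

Lemma clone_const O n b : O (const_bf b) -> clone O (mkBF [ffun _ : n.+1.-tuple bool => b]).
Proof.
move=> Ob; have -> : mkBF [ffun _ : n.+1.-tuple bool => b] =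
    comp_bf (projT2 (const_bf b)) (fun _ => [ffun x : n.+1.-tuple bool => tnth x ord0]).
  by apply: mkBF_ext => x; rewrite !ffunE.
by apply: cl_comp => [|_]; [apply: cl_base|apply: cl_proj].
Qed.

Lemma tuple_of_nth n (x : n.+1.-tuple bool) : [tuple nth false x i | i < n.+1] = x.
Proof. by apply: eq_from_tnth => i; rewrite tnth_mktuple (tnth_nth false). Qed.

Section LatticeClone.
Variables (e : bool) (O : bfset).
Local Notation op := (lat_op e).
Hypotheses (O_op : O (bin_bf op)) (O_e : O (const_bf e)) (O_Ne : O (const_bf (~~ e))).

Lemma clone_op_fold n (S : seq 'I_n.+1) :
  clone O (mkBF [ffun x : n.+1.-tuple bool => foldr (fun i b => op (tnth x i) b) e S]).
Proof.
elim: S => [|i S IH]; first exact: clone_const.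
pose gs (j : 'I_2) := if j == ord0 then [ffun x : n.+1.-tuple bool => tnth x i]
                      else [ffun x => foldr (fun i b => op (tnth x i) b) e S].
have -> : mkBF [ffun x : n.+1.-tuple bool => foldr (fun i b => op (tnth x i) b) e (i :: S)] =
    comp_bf (projT2 (bin_bf op)) gs by apply: mkBF_ext => x; rewrite !ffunE !tnth_mktuple !ffunE.
by apply: cl_comp => [|j]; [apply: cl_base|rewrite /gs; case: ifP => _; [apply: cl_proj|]].
Qed.

Lemma preserves_clone n (f : bfun n) : bf_preserves op f -> clone O (mkBF f).
Proof.
move=> Hf; pose Phi (V : assignment) := f [tuple V i | i < n.+1].
have Hsupp : supported (iota 0 n.+1) Phi.
  move=> V V' HV; congr (f _); apply: eq_from_tnth => i; rewrite !tnth_mktuple.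
  by apply: HV; rewrite mem_iota add0n ltn_ord.
have Hop : preserves op Phi.
  by move=> V V'; rewrite /Phi -Hf; congr (f _); apply: eq_from_tnth => i; rewrite !tnth_mktuple.
have HPhi x : f x = Phi (nth false x) by rewrite /Phi tuple_of_nth.
have [He|HNe] := eqVneq (Phi (fun _ => e)) e; last first.
  have HNe' : Phi (fun _ => e) = ~~ e by move: HNe; case: (Phi (fun _ => e)); case: e.
  have -> : mkBF f = mkBF [ffun _ : n.+1.-tuple bool => ~~ e].
    by apply: mkBF_ext => x; rewrite ffunE HPhi (preserves_const _ Hsupp Hop HNe').
  exact: clone_const.
set S := essential e (iota 0 n.+1) Phi; have HSpt := @essential_point e (iota 0 n.+1) Phi.
have HSind := preserves_indicator_essential Hsupp Hop He.
have -> : mkBF f = mkBF [ffun x : n.+1.-tuple bool =>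
    foldr (fun i b => op (tnth x i) b) e [seq inord i | i <- S]].
  apply: mkBF_ext => x; rewrite ffunE HPhi (preserves_monomial _ Hsupp Hop HSind HSpt).
  rewrite foldr_map foldr_op.
  congr (if _ then _ else _); apply: eq_in_all => i; rewrite mem_filter mem_iota => /and3P [_ _ Hi].
  by rewrite (tnth_nth false) inordK.
exact: clone_op_fold.
Qed.

End LatticeClone.

Lemma clone_neg_bot_const n b : clone set_neg_bot (mkBF [ffun _ : n.+1.-tuple bool => b]).
Proof.
case: b; last by apply: clone_const; right.
have -> : mkBF [ffun _ : n.+1.-tuple bool => true] =
    comp_bf (projT2 neg_bf) (fun _ => [ffun _ : n.+1.-tuple bool => false]).
  by apply: mkBF_ext => x; rewrite !ffunE tnth_mktuple.
by apply: cl_comp => [|_]; [apply: cl_base; left|apply: clone_const; right].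
Qed.

Lemma clone_neg_bot_unary (h : bool -> bool) :
  clone set_neg_bot (mkBF (n := 0) [ffun y => h (tnth y ord0)]).
Proof.
case Hf: (h false); case Ht: (h true).
- have -> : mkBF (n := 0) [ffun y => h (tnth y ord0)] = mkBF (n := 0) [ffun _ => true].
    by apply: mkBF_ext => y; rewrite !ffunE; case: (tnth y ord0).
  exact: clone_neg_bot_const.
- have -> : mkBF (n := 0) [ffun y => h (tnth y ord0)] = neg_bf.
    by apply: mkBF_ext => y; rewrite !ffunE; case: (tnth y ord0).
  by apply: cl_base; left.
- have -> : mkBF (n := 0) [ffun y => h (tnth y ord0)] = proj_bf (n := 0) ord0.
    by apply: mkBF_ext => y; rewrite !ffunE; case: (tnth y ord0).
  exact: cl_proj.
- have -> : mkBF (n := 0) [ffun y => h (tnth y ord0)] = mkBF (n := 0) [ffun _ => false].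
    by apply: mkBF_ext => y; rewrite !ffunE; case: (tnth y ord0).
  exact: clone_neg_bot_const.
Qed.

Lemma ess_unary_clone n (f : bfun n) : bf_ess_unary f -> clone set_neg_bot (mkBF f).
Proof.
case=> i Hi; pose h b := f [tuple b | _ < n.+1].
have -> : mkBF f = comp_bf [ffun y : 1.-tuple bool => h (tnth y ord0)]
                           (fun _ => [ffun x : n.+1.-tuple bool => tnth x i]).
  by apply: mkBF_ext => x; rewrite !ffunE !tnth_mktuple; apply: Hi; rewrite tnth_mktuple.
by apply: cl_comp => [|_]; [apply: clone_neg_bot_unary|apply: cl_proj].
Qed.

Lemma preserves_andb_clone n (f : bfun n) : bf_preserves andb f -> clone set_and_top_bot (mkBF f).
Proof. by apply: (preserves_clone (e := true)); [left|right; left|right; right]. Qed.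

Lemma preserves_orb_clone n (f : bfun n) : bf_preserves orb f -> clone set_or_top_bot (mkBF f).
Proof. by apply: (preserves_clone (e := false)); [left|right; right|right; left]. Qed.

(** * Ternary minors outside the three clones *)

Notation ternary := (bool -> bool -> bool -> bool).

Definition minor3 n (f : bfun n) (sigma : 'I_n.+1 -> nat) (x y z : bool) : bool :=
  f [tuple nth false [:: x; y; z] (sigma i) | i < n.+1].

Lemma minor3E n (f : bfun n) sigma x y z (a : n.+1.-tuple bool) :
  (forall i, nth false [:: x; y; z] (sigma i) = tnth a i) -> minor3 f sigma x y z = f a.
Proof. by move=> H; congr (f _); apply: eq_from_tnth => i; rewrite tnth_mktuple H. Qed.

Definition has2 (P : bool -> bool -> bool) := has (fun u => has (P u) [:: false; true]) [:: false; true].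

Lemma has2P (P : bool -> bool -> bool) u v : P u v -> has2 P.
Proof. by move=> H; apply/hasP; exists u; [case: u {H}|apply/hasP; exists v => //; case: v {H}]. Qed.

Definition has3 (P : ternary) := has (fun x => has2 (P x)) [:: false; true].

Lemma has3Pn (P : ternary) x y z : ~~ has3 P -> ~~ P x y z.
Proof. by apply: contra => /has2P H; apply/hasP; exists x => //; case: x {H}. Qed.

(* Failure to preserve andb (resp. orb), detected on fixed inputs: [t] is not
   monotone on 001 <= 011, or does not respect 011 /\ 101 = 001
   (resp. 100 \/ 010 = 110). *)
Definition nonmonotone3 (t : ternary) := t false false true && ~~ t false true true.
Definition breaks_andb (t : ternary) :=
  nonmonotone3 t || [&& t false true true, t true false true & ~~ t false false true].
Definition breaks_orb (t : ternary) :=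
  nonmonotone3 t || [&& ~~ t true false false, ~~ t false true false & t true true false].

Definition depends_x (t : ternary) := has2 (fun y z => t false y z != t true y z).
Definition depends_y (t : ternary) := has2 (fun x z => t x false z != t x true z).
Definition depends_z (t : ternary) := has2 (fun x y => t x y false != t x y true).

Definition breaks_unary (t : ternary) := depends_x t && (depends_y t || depends_z t).

Definition minor_with n (f : bfun n) (P : ternary -> bool) :=
  exists2 sigma : 'I_n.+1 -> nat, forall i, sigma i < 3 & P (minor3 f sigma).

Lemma minor_nonmonotone n (f : bfun n) (c d : n.+1.-tuple bool) :
  (forall i, tnth c i ==> tnth d i) -> f c -> ~~ f d -> minor_with f nonmonotone3.
Proof.
move=> Hcd Hc Hd; pose sigma i := if tnth c i then 2 else if tnth d i then 1 else 0.
exists sigma => [i|]; first by rewrite /sigma; case: (tnth c i); case: (tnth d i).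
have E001 : minor3 f sigma false false true = f c.
  by apply: minor3E => i; rewrite /sigma; case: (tnth c i); case: (tnth d i).
have E011 : minor3 f sigma false true true = f d.
  by apply: minor3E => i; move: (Hcd i); rewrite /sigma; case: (tnth c i); case: (tnth d i).
by rewrite /nonmonotone3 E001 E011 Hc.
Qed.

Lemma minor_with_orl n (f : bfun n) (P Q : ternary -> bool) :
  minor_with f P -> minor_with f (fun t => P t || Q t).
Proof. by case=> sigma Hsigma HP; exists sigma => //; rewrite HP. Qed.

Lemma minor_breaks_andb n (f : bfun n) : ~ bf_preserves andb f -> minor_with f breaks_andb.
Proof.
move=> Hf; have [a [b Hab]] : exists a b : n.+1.-tuple bool,
    f [tuple tnth a i && tnth b i | i < n.+1] != f a && f b.
  by apply: NNPP => H; apply: Hf => a b; apply/eqP/negPn/negP => Hn; apply: H; exists a, b.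
set ab := [tuple _ | i < n.+1] in Hab.
have Hab_le (c : n.+1.-tuple bool) : c = a \/ c = b -> forall i, tnth ab i ==> tnth c i.
  by case=> -> i; rewrite tnth_mktuple; case: (tnth a i); case: (tnth b i).
case Eab: (f ab) in Hab.
  apply: minor_with_orl; have /nandP [Ha|Hb] : ~~ (f a && f b) by move: Hab; case: (f a && f b).
    by apply: (minor_nonmonotone (Hab_le a (or_introl erefl))); rewrite ?Eab.
  by apply: (minor_nonmonotone (Hab_le b (or_intror erefl))); rewrite ?Eab.
have /andP [Ha Hb] : f a && f b by move: Hab; case: (f a && f b).
pose w := [tuple tnth a i && tnth b i || ~~ tnth a i | i < n.+1].
case Ew: (f w); last first.
  apply: minor_with_orl; apply: (minor_nonmonotone (c := b) (d := w)) => [i||]; rewrite ?Ew //.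
  by rewrite tnth_mktuple; case: (tnth a i); case: (tnth b i).
pose sigma i := if tnth a i && tnth b i then 2 else if tnth a i then 1 else 0.
exists sigma => [i|]; first by rewrite /sigma; case: (tnth a i); case: (tnth b i).
have Ht x y z (c : n.+1.-tuple bool) :
    (forall i, tnth c i = if tnth a i && tnth b i then z else if tnth a i then y else x) ->
    minor3 f sigma x y z = f c.
  by move=> Hc; apply: minor3E => i; rewrite Hc /sigma; case: (tnth a i); case: (tnth b i).
have E011 : minor3 f sigma false true true = f a.
  by apply: Ht => i; case: (tnth a i); case: (tnth b i).
have E101 : minor3 f sigma true false true = f w.
  by apply: Ht => i; rewrite tnth_mktuple; case: (tnth a i); case: (tnth b i).
have E001 : minor3 f sigma false false true = f ab.
  by apply: Ht => i; rewrite tnth_mktuple; case: (tnth a i); case: (tnth b i).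
by rewrite /breaks_andb E011 E101 E001 Ha Ew Eab orbT.
Qed.

Lemma minor_breaks_orb n (f : bfun n) : ~ bf_preserves orb f -> minor_with f breaks_orb.
Proof.
move=> Hf; have [a [b Hab]] : exists a b : n.+1.-tuple bool,
    f [tuple tnth a i || tnth b i | i < n.+1] != f a || f b.
  by apply: NNPP => H; apply: Hf => a b; apply/eqP/negPn/negP => Hn; apply: H; exists a, b.
set ab := [tuple _ | i < n.+1] in Hab.
have Hle_ab (c : n.+1.-tuple bool) : c = a \/ c = b -> forall i, tnth c i ==> tnth ab i.
  by case=> -> i; rewrite tnth_mktuple; case: (tnth a i); case: (tnth b i).
case Eab: (f ab) in Hab; last first.
  apply: minor_with_orl; have /orP [Ha|Hb] : f a || f b by move: Hab; case: (f a || f b).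
    by apply: (minor_nonmonotone (Hle_ab a (or_introl erefl))); rewrite ?Eab.
  by apply: (minor_nonmonotone (Hle_ab b (or_intror erefl))); rewrite ?Eab.
have [Ha Hb] : ~~ f a /\ ~~ f b by move: Hab; case: (f a); case: (f b).
pose w := [tuple ~~ tnth a i && tnth b i | i < n.+1].
case Ew: (f w).
  apply: minor_with_orl; apply: (minor_nonmonotone (c := w) (d := b)) => [i||] //.
  by rewrite tnth_mktuple; case: (tnth a i); case: (tnth b i).
pose sigma i := if tnth a i then 0 else if tnth b i then 1 else 2.
exists sigma => [i|]; first by rewrite /sigma; case: (tnth a i); case: (tnth b i).
have Ht x y z (c : n.+1.-tuple bool) :
    (forall i, tnth c i = if tnth a i then x else if tnth b i then y else z) ->
    minor3 f sigma x y z = f c.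
  by move=> Hc; apply: minor3E => i; rewrite Hc /sigma; case: (tnth a i); case: (tnth b i).
have E100 : minor3 f sigma true false false = f a.
  by apply: Ht => i; case: (tnth a i); case: (tnth b i).
have E010 : minor3 f sigma false true false = f w.
  by apply: Ht => i; rewrite tnth_mktuple; case: (tnth a i); case: (tnth b i).
have E110 : minor3 f sigma true true false = f ab.
  by apply: Ht => i; rewrite tnth_mktuple; case: (tnth a i); case: (tnth b i).
by rewrite /breaks_orb E100 E010 E110 (negbTE Ha) Ew Eab orbT.
Qed.

Definition flip n (a : n.+1.-tuple bool) (k : 'I_n.+1) : n.+1.-tuple bool :=
  [tuple if j == k then ~~ tnth a j else tnth a j | j < n.+1].

Lemma flip_invariant_ess_unary n (f : bfun n) i :
  (forall a k, k != i -> f (flip a k) = f a) -> forall a b, tnth a i = tnth b i -> f a = f b.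
Proof.
move=> Hflip a b Hab; pose mix m := [tuple if j < m then tnth b j else tnth a j | j < n.+1].
have Hmix m : f (mix m.+1) = f (mix m).
  have [Hm|Hm] := ltnP m n.+1; last first.
    congr (f _); apply: eq_from_tnth => j; rewrite !tnth_mktuple.
    by rewrite !(leq_trans (ltn_ord j)) // ltnW.
  pose k := Ordinal Hm.
  have [Ek|Nk] := eqVneq (tnth a k) (tnth b k).
    congr (f _); apply: eq_from_tnth => j; rewrite !tnth_mktuple ltnS leq_eqVlt.
    case: eqP => // Ej; rewrite Ej ltnn; have -> : j = k by apply: val_inj.
    by rewrite Ek.
  have Nki : k != i by apply: contraNneq Nk => Eki; rewrite Eki Hab.
  rewrite -(Hflip _ k Nki); congr (f _); apply: eq_from_tnth => j; rewrite !tnth_mktuple ltnS.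
  case: eqVneq => [->|Njk]; first by rewrite leqnn ltnn; move: Nk; case: (tnth a k); case: (tnth b k).
  by rewrite leq_eqVlt (_ : (j == m :> nat) = false) //; apply/negbTE.
have Hmix0 m : f (mix m) = f (mix 0) by elim: m => // m <-; apply: Hmix.
have -> : b = mix n.+1 by apply: eq_from_tnth => j; rewrite tnth_mktuple ltn_ord.
rewrite Hmix0; congr (f _); apply: eq_from_tnth => j; by rewrite tnth_mktuple.
Qed.

Lemma minor_breaks_unary_at n (f : bfun n) i a :
  f (flip a i) != f a -> f [tuple false | _ < n.+1] = f [tuple j == i | j < n.+1] ->
  minor_with f breaks_unary.
Proof.
move=> Ha H0; pose sigma k := if k == i then 0 else if tnth a k then 2 else 1.
exists sigma => [k|]; first by rewrite /sigma; case: (k == i); case: (tnth a k).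
have Ht x (c : n.+1.-tuple bool) :
    (forall k, tnth c k = if k == i then x else tnth a k) -> minor3 f sigma x false true = f c.
  by move=> Hc; apply: minor3E => k; rewrite Hc /sigma; case: (k == i); case: (tnth a k).
have E000 : minor3 f sigma false false false = f [tuple false | _ < n.+1].
  by apply: minor3E => k; rewrite tnth_mktuple /sigma; case: (k == i); case: (tnth a k).
have E100 : minor3 f sigma true false false = f [tuple j == i | j < n.+1].
  by apply: minor3E => k; rewrite tnth_mktuple /sigma; case: (k == i); case: (tnth a k).
have Ea : minor3 f sigma (tnth a i) false true = f a.
  by apply: Ht => k; case: eqP => [->|].
have Eflip : minor3 f sigma (~~ tnth a i) false true = f (flip a i).
  by apply: Ht => k; rewrite tnth_mktuple; case: eqP => [->|].
have D : minor3 f sigma false false true != minor3 f sigma true false true.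
  by move: Ha; rewrite -Ea -Eflip; case: (tnth a i); rewrite // eq_sym.
apply/andP; split; first exact: (has2P (u := false) (v := true)).
apply/orP; right; move: D; rewrite -H0 -E000 in E100.
case: (boolP (minor3 f sigma false false false == minor3 f sigma false false true)) => [/eqP E0|N0] D.
  by apply: (has2P (u := true) (v := false)); rewrite E100 E0.
exact: (has2P (u := false) (v := false)).
Qed.

Lemma minor_breaks_unary n (f : bfun n) : ~ bf_ess_unary f -> minor_with f breaks_unary.
Proof.
move=> Hf; have [i [a Ha]] : exists i a, f (flip a i) != f a.
  apply: NNPP => H; apply: Hf; exists ord0; apply: flip_invariant_ess_unary => a k _.
  by apply/eqP/negPn/negP => Hn; apply: H; exists k, a.
have [j [a' [Nji Ha']]] : exists j a', j != i /\ f (flip a' j) != f a'.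
  apply: NNPP => H; apply: Hf; exists i; apply: flip_invariant_ess_unary => b k Nki.
  by apply/eqP/negPn/negP => Hn; apply: H; exists k, b.
have [E1|N1] := eqVneq (f [tuple false | _ < n.+1]) (f [tuple k == i | k < n.+1]).
  exact: minor_breaks_unary_at Ha E1.
have [E2|N2] := eqVneq (f [tuple false | _ < n.+1]) (f [tuple k == j | k < n.+1]).
  exact: minor_breaks_unary_at Ha' E2.
pose sigma k := if k == i then 0 else if k == j then 1 else 2.
exists sigma => [k|]; first by rewrite /sigma; case: (k == i); case: (k == j).
have Ht x y (c : n.+1.-tuple bool) :
    (forall k, tnth c k = if k == i then x else if k == j then y else false) ->
    minor3 f sigma x y false = f c.
  by move=> Hc; apply: minor3E => k; rewrite Hc /sigma; case: (k == i); case: (k == j).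
have E000 : minor3 f sigma false false false = f [tuple false | _ < n.+1].
  by apply: Ht => k; rewrite tnth_mktuple; case: (k == i); case: (k == j).
have E100 : minor3 f sigma true false false = f [tuple k == i | k < n.+1].
  by apply: Ht => k; rewrite tnth_mktuple; case: (k == i); case: (k == j).
have E010 : minor3 f sigma false true false = f [tuple k == j | k < n.+1].
  apply: Ht => k; rewrite tnth_mktuple; case: (eqVneq k i) => [->|_]; last by case: (k == j).
  by rewrite eq_sym (negbTE Nji).
apply/andP; split; first by apply: (has2P (u := false) (v := false)); rewrite E000 E100.
by apply/orP; left; apply: (has2P (u := false) (v := false)); rewrite E000 E010.
Qed.

(** * Composing the witnesses into a target function *)

Definition realizes O n (f : bfun n) :=
  exists2 G, inPL O G & forall V, eval V G = f [tuple V i | i < n.+1].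

Definition computes3 (G : formula) (t : ternary) :=
  forall V, eval V G = t (V 0) (V 1) (V 2).

Definition realizes3 O (t : ternary) := exists2 G, inPL O G & computes3 G t.

Lemma realizes3_ext O t u : realizes3 O t -> (forall x y z, t x y z = u x y z) -> realizes3 O u.
Proof. by case=> G HG EG Htu; exists G => // V; rewrite EG Htu. Qed.

Lemma clone_realizes O h : clone O h -> realizes O (projT2 h).
Proof.
elim=> [[n g] Og|n i|n m f gs _ [Gf HGf Ef] _ IH].
- exists (App (mkBF g) (map Var (iota 0 n.+1))).
    constructor => //; first by rewrite size_map size_iota.
    by move=> a Ha; case: (In_map_inv Ha) => x _ ->; constructor.
  move=> V; congr (g _); apply: eq_from_tnth => i; rewrite !tnth_mktuple.
  by rewrite -map_comp (nth_map 0) ?size_iota // nth_iota.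
- by exists (Var i) => [|V]; [constructor|rewrite /= ffunE tnth_mktuple].
have [G HG EG] := fin_all_exists2 IH.
exists (subst (fun j => if j < n.+1 then G (inord j) else Var 0) Gf).
  by apply: inPL_subst => // j; case: ifP => _; [apply: HG|constructor].
move=> V; rewrite eval_subst Ef ffunE; congr (f _); apply: eq_from_tnth => i.
by rewrite !tnth_mktuple ltn_ord inord_val EG.
Qed.

Lemma realizes_minor3 O n (f : bfun n) sigma : realizes O f -> (forall i, sigma i < 3) ->
  realizes3 O (minor3 f sigma).
Proof.
case=> G HG EG Hsigma.
exists (subst (fun j => Var (if j < n.+1 then sigma (inord j) else 0)) G).
  by apply: inPL_subst => // j; constructor.
move=> V; rewrite eval_subst EG; congr (f _); apply: eq_from_tnth => i.
by rewrite !tnth_mktuple /= ltn_ord inord_val; move: (Hsigma i); case: (sigma i) => [|[|[|]]].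
Qed.

Lemma eval_subst3 G t a b c V : computes3 G t ->
  eval V (subst3 G a b c) = t (eval V a) (eval V b) (eval V c).
Proof. by move=> HG; rewrite eval_subst HG. Qed.

Lemma inPL_subst3 O G a b c : inPL O G -> inPL O a -> inPL O b -> inPL O c ->
  inPL O (subst3 G a b c).
Proof. by move=> HG Ha Hb Hc; apply: inPL_subst => // -[|[|[|v]]] //=; rewrite nth_nil. Qed.

(* Truth tables as bytes: bit [4x + 2y + z] of [c] is the value at [(x, y, z)]. *)
Definition tfun (c : nat) (x y z : bool) : bool := odd (iter (4 * x + 2 * y + z) half c).

Definition tcode (t : ternary) : nat :=
  t false false false + (t false false true + (t false true false + (t false true true +
  (t true false false + (t true false true + (t true true false +
  (t true true true).*2).*2).*2).*2).*2).*2).*2.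

Lemma tfun_tcode t x y z : tfun (tcode t) x y z = t x y z.
Proof.
by case: x; case: y; case: z; rewrite /tfun /tcode /= ?half_bit_double ?oddD ?odd_double ?oddb ?addbF.
Qed.

Lemma tcode_lt t : tcode t < 256.
Proof.
rewrite /tcode -!muln2.
move: (leq_b1 (t false false false)) (leq_b1 (t false false true)) (leq_b1 (t false true false))
  (leq_b1 (t false true true)) (leq_b1 (t true false false)) (leq_b1 (t true false true))
  (leq_b1 (t true true false)) (leq_b1 (t true true true)); lia.
Qed.

Lemma breaks_andb_tcode t : breaks_andb (tfun (tcode t)) = breaks_andb t.
Proof. by rewrite /breaks_andb /nonmonotone3 !tfun_tcode. Qed.

Lemma breaks_orb_tcode t : breaks_orb (tfun (tcode t)) = breaks_orb t.
Proof. by rewrite /breaks_orb /nonmonotone3 !tfun_tcode. Qed.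

Lemma breaks_unary_tcode t : breaks_unary (tfun (tcode t)) = breaks_unary t.
Proof. by rewrite /breaks_unary /depends_x /depends_y /depends_z /has2 /= !tfun_tcode. Qed.

Lemma realizes3_tcode O t : realizes3 O t -> realizes3 O (tfun (tcode t)).
Proof. by move=> Rt; apply: realizes3_ext Rt _ => x y z; rewrite tfun_tcode. Qed.

Inductive cterm := CX | CY | CZ | CApp of nat & cterm & cterm & cterm.

Fixpoint ceval (gens : seq nat) (T : cterm) (x y z : bool) : bool :=
  match T with
  | CX => x
  | CY => y
  | CZ => z
  | CApp k a b c => tfun (nth 0 gens k) (ceval gens a x y z) (ceval gens b x y z) (ceval gens c x y z)
  end.

Fixpoint cwf (m : nat) (T : cterm) : bool :=
  if T is CApp k a b c then [&& k < m, cwf m a, cwf m b & cwf m c] else true.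

(* Majority, x xor y xor z, x /\ (y \/ z) and x \/ (y /\ z). *)
Definition targets := [:: 232; 150; 224; 248].

Definition hits_target (gens : seq nat) (T : cterm) : bool :=
  cwf (size gens) T &&
  has (fun c => ~~ has3 (fun x y z => ceval gens T x y z != tfun c x y z)) targets.

(* Composition patterns, found by a search, through which one witness alone
   ([CApp 0]), or the three witnesses together ([CApp 0], [CApp 1], [CApp 2]),
   yield a target. *)
Definition single_shapes : seq cterm := [::
  (CApp 0 CX (CApp 0 CY CZ CY) CX); (CApp 0 CX CX (CApp 0 CY CY CZ));
  (CApp 0 CY CZ (CApp 0 CY CZ CX)); (CApp 0 (CApp 0 CX CY CZ) CY CZ);
  (CApp 0 CY (CApp 0 CY CX CZ) CZ); (CApp 0 (CApp 0 CY CZ CX) CZ CX);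
  (CApp 0 (CApp 0 CY CX CZ) CX CZ); (CApp 0 CY (CApp 0 CY CZ CX) CX);
  (CApp 0 CX (CApp 0 CY CZ CZ) (CApp 0 CY CZ CZ)); (CApp 0 (CApp 0 CX CY CZ) CX (CApp 0 CY CX CZ));
  (CApp 0 CX (CApp 0 CX CY CZ) (CApp 0 CY CZ CY)); (CApp 0 (CApp 0 CY CX (CApp 0 CZ CX CX)) CX CX);
  (CApp 0 CX (CApp 0 (CApp 0 CX CY CX) CZ CX) CX); (CApp 0 (CApp 0 CY (CApp 0 CZ CX CX) CX) CX CX);
  (CApp 0 CX CX (CApp 0 (CApp 0 CX CX CY) CX CZ)); (CApp 0 (CApp 0 CX CY CZ) (CApp 0 CY CZ CX) CX);
  (CApp 0 (CApp 0 CX CX CX) (CApp 0 CY CX CX) CZ); (CApp 0 CX (CApp 0 CY CX CX) (CApp 0 CX CY CZ));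
  (CApp 0 CX (CApp 0 CX CX CX) (CApp 0 CY CZ CY)); (CApp 0 CX (CApp 0 CX CY (CApp 0 CX CZ CX)) CX);
  (CApp 0 (CApp 0 CX CX CX) (CApp 0 CY CZ CZ) (CApp 0 CY CZ CZ));
  (CApp 0 (CApp 0 CX CX CX) (CApp 0 CX CX CX) (CApp 0 CY CY CZ));
  (CApp 0 (CApp 0 CX CX CX) (CApp 0 CX CY CZ) (CApp 0 CX CX CZ));
  (CApp 0 (CApp 0 CX CX CX) (CApp 0 CX CX CX) (CApp 0 CX CY CZ))].

Definition triple_shapes : seq cterm := [::
  (CApp 0 CX (CApp 1 CY CZ CX) CX);
  (CApp 0 CX (CApp 1 CX (CApp 0 (CApp 1 CX CY CX) (CApp 1 CX CZ CX) CX) CX) CX);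
  (CApp 0 CX (CApp 2 (CApp 0 CX CX CX) (CApp 0 CX (CApp 2 CY CZ CX) CX) CX) CX);
  (CApp 0 CX (CApp 2 (CApp 0 CX CX CX) (CApp 0 CX CX CX) (CApp 0 CX (CApp 2 CY CY CZ) CX)) CX)].

Definition uncovered (P : ternary -> bool) : seq nat :=
  [seq c <- iota 0 256 | P (tfun c) && ~~ has (hits_target [:: c]) single_shapes].

Definition triples_hit_target (As Bs Cs : seq nat) : bool :=
  all (fun a => all (fun b => all (fun c => has (hits_target [:: a; b; c]) triple_shapes) Cs) Bs) As.

Lemma triples_hit_targetP As Bs Cs : triples_hit_target As Bs Cs ->
  {in As & Bs & Cs, forall a b c, has (hits_target [:: a; b; c]) triple_shapes}.
Proof. by move=> /allP H a b c /H /allP /(_ b) Hb /Hb /allP; apply. Qed.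

Lemma certificate_holds :
  triples_hit_target (uncovered breaks_andb) (uncovered breaks_orb) (uncovered breaks_unary).
Proof. by vm_compute. Qed.

Lemma ceval_realizes O gens T : {in gens, forall c, realizes3 O (tfun c)} ->
  cwf (size gens) T -> realizes3 O (ceval gens T).
Proof.
move=> Hgens; elim: T => [||| k a IHa b IHb c IHc] /=.
- by move=> _; exists (Var 0) => //; constructor.
- by move=> _; exists (Var 1) => //; constructor.
- by move=> _; exists (Var 2) => //; constructor.
case/and4P => Hk /IHa [A HA EA] /IHb [B HB EB] /IHc [C HC EC].
have [G HG EG] := Hgens _ (mem_nth 0 Hk).
exists (subst3 G A B C); first exact: inPL_subst3.
by move=> V; rewrite (eval_subst3 _ _ _ _ EG) EA EB EC.
Qed.

Lemma shapes_realize_target O gens Ts : {in gens, forall c, realizes3 O (tfun c)} ->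
  has (hits_target gens) Ts -> exists2 c, c \in targets & realizes3 O (tfun c).
Proof.
move=> Hgens; elim: Ts => //= T Ts IH /orP [/andP [HT /hasP [c Hc Heq]]|//]; exists c => //.
apply: realizes3_ext (ceval_realizes Hgens HT) _ => x y z.
by move: Heq => /(has3Pn x y z) /negPn /eqP.
Qed.

Lemma certificate_realizes_target O a b c : a < 256 -> b < 256 -> c < 256 ->
  breaks_andb (tfun a) -> breaks_orb (tfun b) -> breaks_unary (tfun c) ->
  realizes3 O (tfun a) -> realizes3 O (tfun b) -> realizes3 O (tfun c) ->
  exists2 tg, tg \in targets & realizes3 O (tfun tg).
Proof.
move=> Ha Hb Hc Ba Bb Bc Ra Rb Rc.
have single d : realizes3 O (tfun d) -> has (hits_target [:: d]) single_shapes ->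
    exists2 tg, tg \in targets & realizes3 O (tfun tg).
  by move=> Rd; apply: shapes_realize_target => e; rewrite inE => /eqP ->.
have uncoveredP (P : ternary -> bool) d : d < 256 -> P (tfun d) -> realizes3 O (tfun d) ->
    (exists2 tg, tg \in targets & realizes3 O (tfun tg)) \/ d \in uncovered P.
  move=> Hd Pd Rd; case: (boolP (has (hits_target [:: d]) single_shapes)) => [/(single _ Rd)|Nd].
    by left.
  by right; rewrite mem_filter Pd Nd mem_iota.
have [HA|Ua] := uncoveredP _ _ Ha Ba Ra; first exact: HA.
have [HB|Ub] := uncoveredP _ _ Hb Bb Rb; first exact: HB.
have [HC|Uc] := uncoveredP _ _ Hc Bc Rc; first exact: HC.
apply: (shapes_realize_target (gens := [:: a; b; c])).
  by move=> d; rewrite !inE => /or3P [] /eqP ->.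
exact: (triples_hit_targetP certificate_holds Ua Ub Uc).
Qed.

Lemma not_preceq O X : ~ preceq O X -> exists n (f : bfun n), clone O (mkBF f) /\ ~ clone X (mkBF f).
Proof.
move=> H; apply: NNPP => Hn; apply: H => -[n f] Hf.
by apply: NNPP => Hc; apply: Hn; exists n, f.
Qed.

Theorem target_realizable O :
  ~ (preceq O set_and_top_bot \/ preceq O set_or_top_bot \/ preceq O set_neg_bot) ->
  exists2 tg, tg \in targets & realizes3 O (tfun tg).
Proof.
move=> H.
have [nA [fA [CA NA]]] := not_preceq (fun h => H (or_introl h)).
have [nB [fB [CB NB]]] := not_preceq (fun h => H (or_intror (or_introl h))).
have [nC [fC [CC NC]]] := not_preceq (fun h => H (or_intror (or_intror h))).
have [sA HsA BA] := minor_breaks_andb (fun h => NA (preserves_andb_clone h)).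
have [sB HsB BB] := minor_breaks_orb (fun h => NB (preserves_orb_clone h)).
have [sC HsC BC] := minor_breaks_unary (fun h => NC (ess_unary_clone h)).
apply: (certificate_realizes_target (tcode_lt (minor3 fA sA)) (tcode_lt (minor3 fB sB))
  (tcode_lt (minor3 fC sC))).
- by rewrite breaks_andb_tcode.
- by rewrite breaks_orb_tcode.
- by rewrite breaks_unary_tcode.
- exact: realizes3_tcode (realizes_minor3 (clone_realizes CA) HsA).
- exact: realizes3_tcode (realizes_minor3 (clone_realizes CB) HsB).
- exact: realizes3_tcode (realizes_minor3 (clone_realizes CC) HsC).
Qed.

(** * Exponential lower bounds *)

Lemma leq_expn2r m n e : m <= n -> m ^ e <= n ^ e.
Proof. by move=> Hmn; elim: e => // e IH; rewrite !expnS leq_mul. Qed.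

Lemma sqr_le_exp2 m : 4 <= m -> m * m <= 2 ^ m.
Proof.
elim: m => // m IH; rewrite leq_eqVlt => /orP [/eqP <-|Hm] //.
have := IH Hm; rewrite expnS => H.
apply: leq_trans (_ : (m * m).*2 <= _); last by rewrite -mul2n leq_mul2l.
by rewrite -addnn; nia.
Qed.

Lemma exp2_dominates M C D d : exists n, M * (C * n + D).+1 ^ d < 2 ^ n.
Proof.
set m := C * d.+1 + D + M + 5; exists (d.+1 * m).
have Hsq : m * m <= 2 ^ m by apply: sqr_le_exp2; rewrite /m; lia.
have H1 : (C * (d.+1 * m) + D).+1 <= 2 ^ m by apply: leq_trans Hsq; rewrite /m; nia.
have H2 : M < 2 ^ m by apply: leq_trans Hsq; rewrite /m; nia.
rewrite [X in _ < 2 ^ X]mulnC expnM expnS.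
apply: leq_ltn_trans (leq_mul (leqnn M) (leq_expn2r d H1)) _.
by rewrite ltn_pmul2r // !expn_gt0.
Qed.

Import Order.TTheory GRing.Theory Num.Theory.

Definition coef_sum (p : {poly int}) : nat := \sum_(i < size p) absz (p`_i)%R.

Local Open Scope ring_scope.

Lemma horner_le_coef_sum (p : {poly int}) (k : nat) :
  p.[k%:Z] <= (coef_sum p * k.+1 ^ size p)%N%:Z.
Proof.
rewrite horner_coef /coef_sum big_distrl /= (big_morph Posz PoszD (erefl (Posz 0%N))).
apply: ler_sum => i _; apply: (le_trans (ler_norm _)); rewrite normrM normrX PoszM.
apply: ler_pM; rewrite ?exprn_ge0 //.
have -> : `|k%:Z| = k%:Z by [].
rewrite -!natz -natrX ler_nat.
by apply: leq_trans (leq_expn2r i (leqnSn k)) _; rewrite leq_pexp2l // ltnW.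
Qed.

Lemma poly_lt_exp2 (p : {poly int}) (C D : nat) :
  exists n, forall k, (k <= C * n + D)%N -> p.[k%:Z] < (2 ^ n)%N%:Z.
Proof.
have [n Hn] := exp2_dominates (coef_sum p) C D (size p).
exists n => k Hk; apply: le_lt_trans (horner_le_coef_sum p k) _.
by rewrite ltz_nat; apply: leq_ltn_trans Hn; rewrite leq_mul2l leq_expn2r ?orbT.
Qed.

Definition poly_characterizable (O : bfset) :=
  exists p : {poly int}, forall phi, inPL O phi -> forall k, dag_size phi k ->
    exists E : seq example, (size E)%:Z <= p.[k%:Z] /\ uniquely_characterizes O E phi.

Local Close Scope ring_scope.

Lemma separating_family_no_poly O (fam : nat -> formula)
    (alt : forall n, {ffun 'I_n.+1 -> bool} -> formula) C D :
  (forall n, inPL O (fam n)) -> (forall n s, inPL O (alt n s)) ->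
  (forall n, dag_le (fam n) (C * n + D)) ->
  (forall n s, exists V, eval V (alt n s) != eval V (fam n)) ->
  (forall n V s s', eval V (alt n s) != eval V (fam n) ->
     eval V (alt n s') != eval V (fam n) -> s = s') ->
  ~ poly_characterizable O.
Proof.
move=> Hfam Halt Hdag Hwit Huniq [p Hp].
have [n Hn] := poly_lt_exp2 p C D.
have [k Hk Hdk] := dag_le_dag_size (Hdag n).
have [E [HE [Hfit Hchar]]] := Hp _ (Hfam n) k Hdk.
pose sep (i : 'I_(size E)) s := eval (nth (fun _ => false, false) E i).1 (alt n s)
  != eval (nth (fun _ => false, false) E i).1 (fam n).
have Hsep s : exists i, sep i s.
  apply: NNPP => Hno; have [V HV] := Hwit n s; move/negP: HV; apply.
  apply/eqP; apply: (Hchar _ (Halt n s)) => e He; have [i Ei] := In_nth (fun _ => false, false) He.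
  rewrite /fits -(Hfit e He) -Ei; apply/eqP/negPn/negP => Hi; apply: Hno; exists i; exact: Hi.
pose g s := [pick i | sep i s].
have g_inj : injective g.
  move=> s s'; rewrite /g; case: pickP => [i Hi|Hn']; last by have [i] := Hsep s; rewrite Hn'.
  by case: pickP => [j Hj [Eij]|//]; apply: Huniq Hi _; rewrite Eij.
have := leq_card g g_inj; rewrite card_ffun card_bool card_ord card_option card_ord => Hcard.
have := le_lt_trans HE (Hn k Hk); rewrite ltz_nat => HEn.
by move: (leq_trans Hcard HEn); rewrite leq_exp2l // ltnn.
Qed.

Lemma parity_no_poly O : realizes3 O (tfun 150) -> ~ poly_characterizable O.
Proof.
case=> G HG EG [p Hp]; have [E [_ [Hfit Hchar]]] := Hp _ (inPL_var O 0) 1 (dag_size_Var 0).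
pose row (i : 'I_(2 ^ size E).+1) : {ffun 'I_(size E) -> bool} :=
  [ffun j : 'I_(size E) => (nth (fun _ => false, false) E j).1 i.+1].
have [i [j [Nij Eij]]] : exists i j, i <> j /\ row i = row j.
  apply: NNPP => H; have row_inj : injective row.
    by move=> i j Eij; apply: NNPP => Nij; apply: H; exists i, j.
  by have := leq_card row row_inj; rewrite card_ffun card_bool !card_ord ltnn.
have Hrow e : List.In e E -> e.1 i.+1 = e.1 j.+1.
  move=> He; have [k <-] := In_nth (fun _ => false, false) He.
  by move/ffunP/(_ k): Eij; rewrite !ffunE.
have Hpsi V : eval V (subst3 G (Var 0) (Var i.+1) (Var j.+1)) = V 0 (+) V i.+1 (+) V j.+1.
  by rewrite (eval_subst3 _ _ _ _ EG) /=; case: (V 0); case: (V i.+1); case: (V j.+1).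
have : equivalent (subst3 G (Var 0) (Var i.+1) (Var j.+1)) (Var 0).
  apply: Hchar; first by apply: inPL_subst3 => //; constructor.
  by move=> e He; rewrite /fits Hpsi Hrow // -addbA addbb addbF; apply: Hfit.
move=> /(_ (fun v => v == i.+1)); rewrite Hpsi /= eqxx eq_sym.
by case: eqP => // -[/val_inj].
Qed.

Definition acts_as (V : assignment) (F : formula -> formula -> formula) (op : bool -> bool -> bool) :=
  forall a b, eval V (F a b) = op (eval V a) (eval V b).

Definition lattice_at (V : assignment) (F : formula -> formula -> formula) :=
  [\/ acts_as V F andb, acts_as V F orb | exists b, acts_as V F (fun _ _ => b)].

Section FoldSemantics.
Variables (V : assignment) (F : formula -> formula -> formula) (u : nat -> formula) (n : nat).

Lemma eval_fold_andb : acts_as V F andb ->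
  eval V (fold_formula F u n) = all (fun i => eval V (u i)) (iota 0 n.+1).
Proof.
move=> HF; rewrite /fold_formula /=; elim: (iota 1 n) => /= [|i l IH].
  by rewrite HF andbb andbT.
by rewrite HF IH andbCA.
Qed.

Lemma eval_fold_orb : acts_as V F orb ->
  eval V (fold_formula F u n) = has (fun i => eval V (u i)) (iota 0 n.+1).
Proof.
move=> HF; rewrite /fold_formula /=; elim: (iota 1 n) => /= [|i l IH].
  by rewrite HF orbb orbF.
by rewrite HF IH orbCA.
Qed.

Lemma eval_fold_const b : acts_as V F (fun _ _ => b) -> eval V (fold_formula F u n) = b.
Proof. by move=> HF; rewrite /fold_formula; case: (iota 1 n) => [|i l]; rewrite /= HF. Qed.

End FoldSemantics.

Definition xvar (i : nat) : formula := Var i.*2.+2.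
Definition yvar (i : nat) : formula := Var i.*2.+3.
Definition pick_var n (s : {ffun 'I_n.+1 -> bool}) (i : nat) : formula :=
  if s (inord i) then xvar i else yvar i.

Lemma pick_var_unique n V (s s' : {ffun 'I_n.+1 -> bool}) b :
  (forall i, i < n.+1 -> [/\ eval V (pick_var s i) = b, eval V (pick_var s' i) = b &
     if b then ~~ (eval V (xvar i) && eval V (yvar i)) else eval V (xvar i) || eval V (yvar i)]) ->
  s = s'.
Proof.
move=> H; apply/ffunP => i; have [] := H i (ltn_ord i); rewrite /pick_var inord_val.
by case: (s i); case: (s' i) => // -> ->; case: b {H}.
Qed.

Lemma all_const (T : Type) (b : bool) (x : T) (l : seq T) : all (fun _ => b) (x :: l) = b.
Proof. by case: b; rewrite /= ?all_predT. Qed.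

Lemma has_const (T : Type) (b : bool) (x : T) (l : seq T) : has (fun _ => b) (x :: l) = b.
Proof. by case: b; rewrite /= ?has_pred0. Qed.

Section LatticeFamily.
Variables (O : bfset) (A B : formula -> formula -> formula) (c : nat).
Hypotheses (inPL_A : forall a b, inPL O a -> inPL O b -> inPL O (A a b))
           (inPL_B : forall a b, inPL O a -> inPL O b -> inPL O (B a b)).
Hypotheses (dag_A : forall a b Na Nb, dag_le a Na -> dag_le b Nb -> dag_le (A a b) (c + (Na + Nb)))
           (dag_B : forall a b Na Nb, dag_le a Na -> dag_le b Nb -> dag_le (B a b) (c + (Na + Nb))).
Hypotheses (lattice_A : forall V, lattice_at V A) (lattice_B : forall V, lattice_at V B).
Hypothesis and_or : exists b0 b1,
  forall V : assignment, V 0 = b0 -> V 1 = b1 -> acts_as V A andb /\ acts_as V B orb.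

(* Where [A] acts as andb and [B] as orb, [pair_family n] is the disjunction of
   the [x_i /\ y_i] and [pair_variant s] adds the disjunct /\_i z_i, where [s]
   picks [z_i] among [x_i] and [y_i]. *)
Definition pair_family n := fold_formula B (fun i => A (xvar i) (yvar i)) n.
Definition pair_variant n (s : {ffun 'I_n.+1 -> bool}) :=
  B (pair_family n) (fold_formula A (pick_var s) n).

Lemma pair_variant_separated_unique n V (s s' : {ffun 'I_n.+1 -> bool}) :
  eval V (pair_variant s) != eval V (pair_family n) ->
  eval V (pair_variant s') != eval V (pair_family n) -> s = s'.
Proof.
have Hpick (s0 : {ffun 'I_n.+1 -> bool}) i :
    (eval V (xvar i) && eval V (yvar i) ==> eval V (pick_var s0 i)) &&
    (eval V (pick_var s0 i) ==> eval V (xvar i) || eval V (yvar i)).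
  by rewrite /pick_var; case: (s0 _); case: (eval V (xvar i)); case: (eval V (yvar i)).
rewrite /pair_variant /pair_family.
case: (lattice_B V) => [HB|HB|[b HB]]; last by rewrite HB (eval_fold_const _ _ HB) eqxx.
- rewrite !HB (eval_fold_andb _ _ HB).
  case: (lattice_A V) => [HA|HA|[b HA]]; rewrite (eq_all (fun i => HA (xvar i) (yvar i))).
  + rewrite !(eval_fold_andb _ _ HA); case: allP => [Hall|_]; rewrite ?andFb ?eqxx // !andTb.
    have Hz (s0 : {ffun 'I_n.+1 -> bool}) : all (fun i => eval V (pick_var s0 i)) (iota 0 n.+1).
      by apply/allP => i /Hall Hi; have /andP [/implyP H _] := Hpick s0 i; apply: H.
    by rewrite !Hz.
  + rewrite !(eval_fold_orb _ _ HA); case: allP => [Hall|_]; rewrite ?andFb ?eqxx // !andTb !eqb_id.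
    move=> /hasPn Hs /hasPn Hs'; apply: (pick_var_unique (b := false)) => i Hi.
    by split; [apply/negbTE/Hs|apply/negbTE/Hs'|apply: Hall]; rewrite mem_iota.
  + by rewrite !(eval_fold_const _ _ HA) all_const andbb eqxx.
rewrite !HB (eval_fold_orb _ _ HB).
case: (lattice_A V) => [HA|HA|[b HA]]; rewrite (eq_has (fun i => HA (xvar i) (yvar i))).
- rewrite !(eval_fold_andb _ _ HA).
  case: hasP => [_|Hno]; rewrite ?orTb ?eqxx // !orFb !eqbF_neg !negbK => /allP Hs /allP Hs'.
  apply: (pick_var_unique (b := true)) => i Hi.
  by split; [apply: Hs|apply: Hs'|apply/negP => HXY; apply: Hno; exists i]; rewrite ?mem_iota.
- rewrite !(eval_fold_orb _ _ HA); case: hasP => [_|Hno]; rewrite ?orTb ?eqxx // !orFb.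
  have Hz (s0 : {ffun 'I_n.+1 -> bool}) : has (fun i => eval V (pick_var s0 i)) (iota 0 n.+1) = false.
    apply/hasP => -[i Hi Hz]; apply: Hno; exists i => //.
    by have /andP [_ /implyP] := Hpick s0 i; apply.
  by rewrite !Hz eqxx.
by rewrite !(eval_fold_const _ _ HA) has_const orbb eqxx.
Qed.

Lemma pair_variant_separated n (s : {ffun 'I_n.+1 -> bool}) :
  exists V, eval V (pair_variant s) != eval V (pair_family n).
Proof.
have [b0 [b1 Hb]] := and_or.
pose V v := if v is v'.+2 then odd v' (+) s (inord v'./2) else if v is 0 then b0 else b1.
have [HA HB] := Hb V erefl erefl; exists V.
have Hx i : eval V (xvar i) = s (inord i) by rewrite /= odd_double doubleK.
have Hy i : eval V (yvar i) = ~~ s (inord i) by rewrite /= odd_double uphalf_double.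
rewrite /pair_variant /pair_family HB (eval_fold_orb _ _ HB) (eval_fold_andb _ _ HA).
rewrite (eq_has (fun i => HA (xvar i) (yvar i))).
have -> : has (fun i => eval V (xvar i) && eval V (yvar i)) (iota 0 n.+1) = false.
  by apply/hasPn => i _; rewrite Hx Hy andbN.
suff -> : all (fun i => eval V (pick_var s i)) (iota 0 n.+1) by [].
by apply/allP => i _; rewrite /pick_var; case E: (s (inord i)); rewrite ?Hx ?Hy E.
Qed.

Lemma lattice_family_no_poly : ~ poly_characterizable O.
Proof.
have HT i : inPL O (A (xvar i) (yvar i)) by apply: inPL_A; constructor.
apply: (separating_family_no_poly (fam := pair_family) (alt := @pair_variant)
  (C := c + (c + 2)) (D := c + (c + 2) + (c + 2))).
- by move=> n; apply: inPL_fold_formula.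
- move=> n s; apply: inPL_B; apply: inPL_fold_formula => // i.
  by rewrite /pick_var; case: ifP; constructor.
- move=> n; have HTdag i : dag_le (A (xvar i) (yvar i)) (c + 2).
    exact: dag_A (dag_le_Var _) (dag_le_Var _).
  by apply: dag_le_leq (dag_le_fold_formula n dag_B HTdag) _; lia.
- exact: pair_variant_separated.
- exact: pair_variant_separated_unique.
Qed.

End LatticeFamily.

Lemma majority_no_poly O : realizes3 O (tfun 232) -> ~ poly_characterizable O.
Proof.
case=> G HG EG; have Emaj V a b k : eval V (subst3 G a b (Var k)) =
    if V k then eval V a || eval V b else eval V a && eval V b.
  by rewrite (eval_subst3 _ _ _ _ EG) /=; case: (V k); case: (eval V a); case: (eval V b).
have lattice_maj k V : lattice_at V (fun a b => subst3 G a b (Var k)).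
  by case Ek: (V k); [apply: Or32|apply: Or31] => a b; rewrite Emaj Ek.
apply: (lattice_family_no_poly (A := fun a b => subst3 G a b (Var 1))
  (B := fun a b => subst3 G a b (Var 0)) (c := size (subformulas G) + 1)) => //.
- by move=> a b Ha Hb; apply: inPL_subst3 => //; constructor.
- by move=> a b Ha Hb; apply: inPL_subst3 => //; constructor.
- by move=> a b Na Nb Ha Hb; apply: dag_le_leq (dag_le_subst3 G Ha Hb (dag_le_Var 1)) _; lia.
- by move=> a b Na Nb Ha Hb; apply: dag_le_leq (dag_le_subst3 G Ha Hb (dag_le_Var 0)) _; lia.
by exists true, false => V H0 H1; split=> a b; rewrite Emaj ?H0 ?H1.
Qed.

Lemma and_guarded_or_no_poly O : realizes3 O (tfun 224) -> ~ poly_characterizable O.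
Proof.
case=> G HG EG.
have Eand V a b : eval V (subst3 G a b b) = eval V a && eval V b.
  by rewrite (eval_subst3 _ _ _ _ EG); case: (eval V a); case: (eval V b).
have Eor V a b : eval V (subst3 G (Var 0) a b) = V 0 && (eval V a || eval V b).
  by rewrite (eval_subst3 _ _ _ _ EG) /=; case: (V 0); case: (eval V a); case: (eval V b).
apply: (lattice_family_no_poly (A := fun a b => subst3 G a b b)
  (B := fun a b => subst3 G (Var 0) a b) (c := size (subformulas G) + 1)).
- by move=> a b Ha Hb; apply: inPL_subst3.
- by move=> a b Ha Hb; apply: inPL_subst3 => //; constructor.
- by move=> a b Na Nb Ha Hb; apply: dag_le_leq (dag_le_subst3_dup G Ha Hb) _; lia.
- by move=> a b Na Nb Ha Hb; apply: dag_le_leq (dag_le_subst3 G (dag_le_Var 0) Ha Hb) _; lia.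
- by move=> V; apply: Or31 => a b; rewrite Eand.
- by move=> V; case E0: (V 0); [apply: Or32|apply: Or33; exists false] => a b; rewrite Eor E0.
by exists true, false => V H0 _; split=> a b; rewrite ?Eand ?Eor ?H0.
Qed.

Lemma or_guarded_and_no_poly O : realizes3 O (tfun 248) -> ~ poly_characterizable O.
Proof.
case=> G HG EG.
have Eor V a b : eval V (subst3 G a b b) = eval V a || eval V b.
  by rewrite (eval_subst3 _ _ _ _ EG); case: (eval V a); case: (eval V b).
have Eand V a b : eval V (subst3 G (Var 0) a b) = V 0 || eval V a && eval V b.
  by rewrite (eval_subst3 _ _ _ _ EG) /=; case: (V 0); case: (eval V a); case: (eval V b).
apply: (lattice_family_no_poly (A := fun a b => subst3 G (Var 0) a b)
  (B := fun a b => subst3 G a b b) (c := size (subformulas G) + 1)).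
- by move=> a b Ha Hb; apply: inPL_subst3 => //; constructor.
- by move=> a b Ha Hb; apply: inPL_subst3.
- by move=> a b Na Nb Ha Hb; apply: dag_le_leq (dag_le_subst3 G (dag_le_Var 0) Ha Hb) _; lia.
- by move=> a b Na Nb Ha Hb; apply: dag_le_leq (dag_le_subst3_dup G Ha Hb) _; lia.
- by move=> V; case E0: (V 0); [apply: Or33; exists true|apply: Or31] => a b; rewrite Eand E0.
- by move=> V; apply: Or32 => a b; rewrite Eor.
by exists false, false => V H0 _; split=> a b; rewrite ?Eand ?Eor ?H0.
Qed.

Local Open Scope ring_scope.

Theorem theorem3p20 (O : bfset) :
  ((preceq O set_and_top_bot \/ preceq O set_or_top_bot \/ preceq O set_neg_bot) ->
     forall (phi : formula), inPL O phi -> forall k : nat, dag_size phi k ->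
       exists E : seq example, (size E <= k.+1)%N /\ uniquely_characterizes O E phi)
  /\
  (~ (preceq O set_and_top_bot \/ preceq O set_or_top_bot \/ preceq O set_neg_bot) ->
     ~ exists p : {poly int},
         forall (phi : formula), inPL O phi -> forall k : nat, dag_size phi k ->
           exists E : seq example, (size E)%:Z <= p.[k%:Z] /\ uniquely_characterizes O E phi).
Proof.
split=> [|HO]; first exact: small_characterization.
have [tg Htg Rtg] := target_realizable HO.
move: Htg Rtg; rewrite !inE => /or4P [] /eqP ->.
- exact: majority_no_poly.
- exact: parity_no_poly.
- exact: and_guarded_or_no_poly.
- exact: or_guarded_and_no_poly.
Qed.
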